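(* Let $f,f'\colon\mathbb F_2^n\to\mathbb F_2$ be two Boolean functions (not necessarily bent). If the translation designs $\operatorname{dev}(D_f)$ and $\operatorname{dev}(D_{f'})$ are isomorphic, then the translation designs $\operatorname{dev}(G_f)$ and $\operatorname{dev}(G_{f'})$ are isomorphic.
   Context: For a subset $A$ of an additive group $G$, the development $\operatorname{dev}(A)$ is the incidence structure whose points are the elements of $G$ and whose blocks are the translates $A+g=\{a+g:a\in A\}$, $g\in G$ (one block per $g$; its incidence matrix has rows indexed by $g$). For $f\colon\mathbb F_2^n\to\mathbb F_2$, $D_f=\{\mathbf x: f(\mathbf x)=1\}\subseteq\mathbb F_2^n$ is its support and $G_f=\{(\mathbf x,f(\mathbf x)):\mathbf x\in\mathbb F_2^n\}\subseteq\mathbb F_2^n\times\mathbb F_2$ its graph. Two incidence structures with incidence matrices $M,M'$ are isomorphic if $M=PM'Q$ for some permutation matrices $P,Q$. *)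

From HB Require Import structures.
From mathcomp Require Import all_boot all_order all_algebra all_fingroup.
Set Implicit Arguments. Unset Strict Implicit. Unset Printing Implicit Defensive.
Import GRing.Theory.
Local Open Scope ring_scope.

(* Incidence matrix of dev(A) for A a subset of a finite additive group G:
   rows indexed by g : G (the block A + g), columns by points x : G;
   entry is true iff x \in A + g, i.e. x - g \in A. *)
Definition dev_inc (G : finZmodType) (A : {set G}) (g x : G) : bool :=
  x - g \in A.

(* Isomorphism of incidence structures given by (boolean) incidence matrices
   with rows indexed by R, R' and columns by C, C':
   M = P M' Q for permutation matrices P, Q, i.e. there are bijections
   sigma : R -> R', tau : C -> C' with M r c = M' (sigma r) (tau c). *)
Definition inc_iso (R C R' C' : finType) (M : R -> C -> bool) (M' : R' -> C' -> bool) : Prop :=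
  exists (sigma : R -> R') (tau : C -> C'),
    [/\ bijective sigma, bijective tau &
        forall r c, M r c = M' (sigma r) (tau c)].

Notation vec n := ('rV['F_2]_n).

Definition vec1 n := (vec n * 'F_2)%type.
HB.instance Definition _ n := GRing.Zmodule.on (vec1 n).
HB.instance Definition _ n := Finite.on (vec1 n).

Definition supp n (f : vec n -> 'F_2) : {set vec n} := [set x | f x == 1].
Definition graphf n (f : vec n -> 'F_2) : {set vec1 n} :=
  [set p | p.2 == f p.1].

(* An isomorphism (sigma, tau) of dev(D_f) and dev(D_f') says exactly that
   f (x - g) = f' (tau x - sigma g), since a value in F_2 is determined by
   whether it equals 1.  As (x, a) - (g, b) lies in G_f iff a - b = f (x - g),
   the maps sigma and tau, extended by the identity on the last coordinate,
   are then an isomorphism of dev(G_f) and dev(G_f'). *)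

From HB Require Import structures.
From mathcomp Require Import all_boot all_order all_algebra all_fingroup.

Set Implicit Arguments. Unset Strict Implicit. Unset Printing Implicit Defensive.
Import GRing.Theory.
Local Open Scope ring_scope.

Lemma F2_eq1_inj : injective (fun a : 'F_2 => a == 1).
Proof.
by case=> -[|[|//]] ?; case=> -[|[|//]] ? /= E; apply/val_inj.
Qed.

Lemma bijective_map_fst (A B C : Type) (s : A -> B) :
  bijective s -> bijective (fun p : A * C => (s p.1, p.2)).
Proof.
by case=> si sK siK; exists (fun p : B * C => (si p.1, p.2)) => -[a c] /=;
  rewrite ?sK ?siK.
Qed.

Lemma dev_inc_supp n (f : vec n -> 'F_2) g x :
  dev_inc (supp f) g x = (f (x - g) == 1).
Proof. by rewrite /dev_inc inE. Qed.

Lemma dev_inc_graphf n (f : vec n -> 'F_2) (g x : vec n) (b a : 'F_2) :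
  dev_inc (graphf f) ((g, b) : vec1 n) (x, a) = (a - b == f (x - g)).
Proof. by rewrite /dev_inc inE. Qed.

Theorem proposition1 (n : nat) (f f' : 'rV['F_2]_n -> 'F_2) :
  inc_iso (dev_inc (supp f)) (dev_inc (supp f')) ->
  inc_iso (dev_inc (graphf f)) (dev_inc (graphf f')).
Proof.
case=> sigma [tau [bij_sigma bij_tau iso]].
have f_eq g x : f (x - g) = f' (tau x - sigma g).
  by apply: F2_eq1_inj; rewrite /= -!dev_inc_supp.
exists (fun p : vec1 n => (sigma p.1, p.2)), (fun p : vec1 n => (tau p.1, p.2)).
split; [exact: bijective_map_fst | exact: bijective_map_fst |].
by move=> [g b] [x a]; rewrite !dev_inc_graphf f_eq.
Qed.
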